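(* Let $v$, $g$, $b$ be positive integers with $v$ odd, and suppose a $(v,g,b)$ non-half-sum disjoint packing exists. Then there exists a $(v,v,v-bg,bv)$ placement delivery array. Consequently, there exists a $v$-division $(K=v,M,N)$ coded caching scheme with memory ratio $\frac{M}{N}=1-\frac{bg}{v}$, subpacketization $F=v$, transmission load $R=b$, and coded caching gain $\frac{K(1-M/N)}{R}=g$.
   Context: Arithmetic is in $\mathbb{Z}_v$, the ring of integers modulo $v$; since $v$ is odd, $2$ is invertible and the half-sum of $x,y\in\mathbb{Z}_v$ is $(x+y)\cdot 2^{-1}$. A $(v,g,b)$ non-half-sum disjoint packing (NHSDP) is a pair $(\mathbb{Z}_v,\mathfrak{D})$ where $\mathfrak{D}$ is a family of $b$ subsets (''blocks'') of $\mathbb{Z}_v$, each of size $g$, such that (i) any two different blocks are disjoint, and (ii) for each block $\mathcal{D}\in\mathfrak{D}$ and any two different elements $x,y\in\mathcal{D}$, the half-sum $(x+y)/2$ does not belong to any block of $\mathfrak{D}$. A $(K,F,Z,S)$ placement delivery array (PDA) is an $F\times K$ array $\mathbf{P}=(p_{j,k})$ with entries from $\{*\}\cup[S]$ such that: (C1) each column contains exactly $Z$ stars; (C2) each integer of $[S]$ occurs at least once; (C3) for any two distinct entries $p_{j_1,k_1}=p_{j_2,k_2}=s\in[S]$ we have $j_1\neq j_2$, $k_1\neq k_2$, and $p_{j_1,k_2}=p_{j_2,k_1}=*$. A $(K,M,N)$ coded caching system consists of a server storing $N$ equal-size files and $K$ users each with a cache of size $M$ files, connected by an error-free shared broadcast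 link. An $F$-division scheme splits each file into $F$ equal-size packets; in the placement phase packets are stored in user caches without knowledge of future demands; in the delivery phase each user requests one file and the server broadcasts coded messages (XORs of packets) so that every user can decode its requested file. The transmission load $R$ is the worst case over all demand vectors of the total broadcast size normalized by the file size; $M/N$ is the memory ratio and $F$ the subpacketization. The coded caching gain is $K(1-M/N)/R$. *)

From mathcomp Require Import all_boot all_order all_algebra.
Set Implicit Arguments. Unset Strict Implicit. Unset Printing Implicit Defensive.

(* Z_v is represented by 'I_v (residues 0..v-1), which
   also works for v = 1 (unlike 'Z_v). *)

(* The inverse of 2 modulo an odd v is (v+1)/2. *)
Definition inv2 (v : nat) : nat := (v.+1)./2.

Definition half_sum (v : nat) (x y : 'I_v) : nat := ((x + y) * inv2 v) %% v.

Definition NHSDP (v g b : nat) (D : 'I_b -> {set 'I_v}) : Prop :=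
  [/\ forall i, #|D i| = g,
      forall i j, i != j -> [disjoint D i & D j]
    & forall i (x y : 'I_v), x \in D i -> y \in D i -> x != y ->
        forall j (z : 'I_v), z \in D j -> val z != half_sum x y].

(* (K,F,Z,S) placement delivery array: an F x K array; None is the star,
   Some s (s : 'I_S) are the integers of [S] (relabelled 0..S-1). *)
Definition PDA (K F Z S : nat) (P : 'I_F -> 'I_K -> option 'I_S) : Prop :=
  [/\ (forall k, #|[set j | P j k == None]| = Z),
      (forall s, exists j, exists k, P j k = Some s)
    & (forall j1 j2 k1 k2 s, P j1 k1 = Some s -> P j2 k2 = Some s ->
         (j1, k1) != (j2, k2) ->
         [/\ j1 != j2, k1 != k2, P j1 k2 = None & P j2 k1 = None])].
Arguments NHSDP : clear implicits.
Arguments PDA : clear implicits.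

From mathcomp Require Import all_boot all_order all_algebra.
From mathcomp Require Import ring.
Import GRing.Theory Num.Theory.
Set Implicit Arguments. Unset Strict Implicit. Unset Printing Implicit Defensive.

(* Index the rows and columns of the array by Z_v and put the integer
   (i, j + k) in cell (j, k) exactly when j - k lies in the block D_i; there
   are b v such integers.  A column k has a star in row j iff j - k misses all
   b g points of the packing, so it has v - b g stars.  The integer (i, t)
   appears in the cells (j, k) with j + k = t and j - k = x in D_i, i.e.
   j = (t + x)/2 and k = (t - x)/2.  Two such cells, for x1 != x2, satisfy
   j1 - k2 = j2 - k1 = (x1 + x2)/2, a half-sum of D_i, which lies in no block:
   both crossing cells are stars. *)

Lemma card_bigcup_disjoint (I T : finType) (F : I -> {set T}) :
  (forall i j, i != j -> [disjoint F i & F j]) ->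
  #|\bigcup_i F i| = \sum_i #|F i|.
Proof.
move=> disjF; rewrite -sum1_card (partition_disjoint_bigcup _ _ disjF).
by apply: eq_bigr => i _; rewrite sum1_card.
Qed.

Section ZmodIdentities.
Local Open Scope ring_scope.
Variable V : zmodType.

Lemma addr_addsub (x y : V) : (x + y) + (x - y) = x *+ 2.
Proof. by rewrite addrACA subrr addr0. Qed.

Lemma subr_addsub (x y : V) : (x + y) - (x - y) = y *+ 2.
Proof. by rewrite opprB addrC subrKA. Qed.

Lemma subr_cross (j1 k1 j2 k2 : V) : j1 + k1 = j2 + k2 -> j1 - k2 = j2 - k1.
Proof. by move=> e; apply/eqP; rewrite subr_eq addrAC -e addrK. Qed.

Lemma mulr2n_cross (j1 k1 j2 k2 : V) :
  j1 + k1 = j2 + k2 -> (j1 - k2) *+ 2 = (j1 - k1) + (j2 - k2).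
Proof.
move=> e; rewrite mulr2n {2}(subr_cross e) addrACA [- k2 + _]addrC addrACA.
by rewrite [j2 + _]addrC.
Qed.

End ZmodIdentities.

Section Halving.
Local Open Scope ring_scope.
Variables (V : zmodType) (c : nat).
Hypothesis mulrn_c2 : forall a : V, a *+ (c * 2) = a.

Lemma mulrn_half_eq (x y : V) : (y *+ c == x) = (x *+ 2 == y).
Proof.
apply/eqP/eqP => [<-|<-]; first by rewrite -mulrnA.
by rewrite -mulrnA mulnC.
Qed.

Lemma mulr2n_inj : injective (fun x : V => x *+ 2).
Proof.
by move=> x y /= e; rewrite -[x]mulrn_c2 -[y]mulrn_c2 mulnC !mulrnA e.
Qed.

End Halving.

Lemma mxvec_index_inj m n (i1 i2 : 'I_m) (j1 j2 : 'I_n) :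
  mxvec_index i1 j1 = mxvec_index i2 j2 -> i1 = i2 /\ j1 = j2.
Proof. by move/cast_ord_inj/enum_rank_inj => [-> ->]. Qed.

Section DifferencePDA.
Local Open Scope ring_scope.
Variables (n b g : nat) (D : 'I_b -> {set 'I_n.+1}).
Local Notation v := n.+1.
Local Notation union := (\bigcup_i D i).

Definition half (x : 'I_v) : 'I_v := x *+ inv2 v.

Lemma val_half_add (x y : 'I_v) : val (half (x + y)) = half_sum x y.
Proof. by rewrite /half Zp_mulrn /= modnMml. Qed.

Lemma mulrn_inv2 : odd v -> forall a : 'I_v, a *+ (inv2 v * 2) = a.
Proof.
move=> odd_v a; rewrite muln2 /inv2 even_halfK /= ?negbK // mulrSr.
have -> : a *+ v = 0 by apply: val_inj; rewrite Zp_mulrn /= modnMl.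
by rewrite add0r.
Qed.

Definition diff_pda (j k : 'I_v) : option 'I_(b * v) :=
  if [pick i | j - k \in D i] is Some i then Some (mxvec_index i (j + k))
  else None.

Lemma diff_pda_None j k : (diff_pda j k == None) = (j - k \notin union).
Proof.
rewrite /diff_pda; case: pickP => [i xi|noblock]; apply/esym.
  by apply/negbF/bigcupP; exists i.
by apply/bigcupP => -[i _ xi]; have := noblock i; rewrite /= xi.
Qed.

Lemma diff_pda_Some j k s :
  diff_pda j k = Some s -> exists2 i, j - k \in D i & s = mxvec_index i (j + k).
Proof. by rewrite /diff_pda; case: pickP => // i xi [<-]; exists i. Qed.

Hypothesis disjD : forall i i', i != i' -> [disjoint D i & D i'].

Lemma diff_pdaE j k x t i :
  j - k = x -> j + k = t -> x \in D i -> diff_pda j k = Some (mxvec_index i t).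
Proof.
move=> <- <- xi; rewrite /diff_pda.
case: pickP => [i' xi'|]; last by move/(_ i); rewrite /= xi.
case: (eqVneq i' i) => [-> //|ne].
by rewrite (disjointFr (disjD ne) xi') in xi.
Qed.

Lemma card_diff_pda_stars k :
  #|[set j | diff_pda j k == None]| = (v - #|union|)%N.
Proof.
have -> : [set j | diff_pda j k == None] = ~: ((fun j => j - k) @^-1: union).
  by apply/setP => j; rewrite !inE diff_pda_None.
by rewrite cardsCs setCK card_preimset ?card_ord //; apply: addIr.
Qed.

Hypothesis odd_v : odd v.

Lemma half_eq (x y : 'I_v) : (half y == x) = (x *+ 2 == y).
Proof. exact/mulrn_half_eq/mulrn_inv2. Qed.

Lemma diff_pda_surj s :
  (forall i, D i != set0) -> exists j, exists k, diff_pda j k = Some s.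
Proof.
move=> nonempty; case/mxvec_indexP: s => i t.
have /set0Pn [x xi] := nonempty i.
have halfK (a : 'I_v) : half (a *+ 2) = a by apply/eqP; rewrite half_eq.
exists (half (t + x)), (half (t - x)).
have diff_jk : half (t + x) - half (t - x) = x.
  by rewrite /half -mulrnBl subr_addsub; apply: halfK.
have sum_jk : half (t + x) + half (t - x) = t.
  by rewrite /half -mulrnDl addr_addsub; apply: halfK.
exact: diff_pdaE diff_jk sum_jk xi.
Qed.

Hypothesis half_sum_free : forall i (x y : 'I_v), x \in D i -> y \in D i ->
  x != y -> forall i' (z : 'I_v), z \in D i' -> val z != half_sum x y.

Lemma diff_pda_cross j1 j2 k1 k2 s :
    diff_pda j1 k1 = Some s -> diff_pda j2 k2 = Some s ->
    (j1, k1) != (j2, k2) ->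
  [/\ j1 != j2, k1 != k2, diff_pda j1 k2 = None & diff_pda j2 k1 = None].
Proof.
move=> /diff_pda_Some [i x1i ->] /diff_pda_Some [i' x2i].
move=> /mxvec_index_inj [same_i same_t] ne; rewrite -{i'}same_i in x2i.
have ne_j : j1 != j2.
  by apply: contraNneq ne => ej; move: same_t; rewrite ej => /addrI ->.
have ne_k : k1 != k2.
  by apply: contraNneq ne => ek; move: same_t; rewrite ek => /addIr ->.
have ne_x : j1 - k1 != j2 - k2.
  apply: contraNneq ne_j => same_x.
  apply/eqP/(mulr2n_inj (mulrn_inv2 odd_v)).
  by rewrite /= -(addr_addsub j1 k1) -(addr_addsub j2 k2) same_t same_x.
have star j k : j - k = half ((j1 - k1) + (j2 - k2)) -> diff_pda j k = None.
  move=> e; apply/eqP; rewrite diff_pda_None; apply/bigcupP => -[i3 _ zi].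
  by have := half_sum_free x1i x2i ne_x zi; rewrite -val_half_add -e eqxx.
split=> //; apply: star; apply/esym/eqP; rewrite half_eq.
  by rewrite (mulr2n_cross same_t).
by rewrite -(subr_cross same_t) (mulr2n_cross same_t).
Qed.

End DifferencePDA.

Lemma card_packing_union v g b (D : 'I_b -> {set 'I_v}) :
  NHSDP v g b D -> #|\bigcup_i D i| = b * g.
Proof.
case=> card_D disj_D _; rewrite card_bigcup_disjoint //.
by rewrite (eq_bigr _ (fun i _ => card_D i)) sum_nat_const card_ord.
Qed.

Lemma packing_diff_pda n g b (D : 'I_b -> {set 'I_n.+1}) :
    odd n.+1 -> 0 < g -> NHSDP n.+1 g b D ->
  PDA n.+1 n.+1 (n.+1 - b * g) (b * n.+1) (diff_pda D).
Proof.
move=> odd_v g_gt0 packing; have [card_D disj_D half_sum_free] := packing.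
split.
- by move=> k; rewrite card_diff_pda_stars (card_packing_union packing).
- by move=> s; apply: diff_pda_surj => // i; rewrite -card_gt0 card_D.
- by move=> ? ? ? ?; apply: diff_pda_cross.
Qed.

Lemma pda_scheme_parameters (R : numFieldType) (v g b : nat) :
    0 < v -> 0 < b -> b * g <= v ->
  [/\ ((v - b * g)%:R / v%:R = 1 - (b * g)%:R / v%:R :> R)%R,
      ((b * v)%:R / v%:R = b%:R :> R)%R
    & (v%:R * (1 - (v - b * g)%:R / v%:R) / ((b * v)%:R / v%:R) = g%:R :> R)%R].
Proof.
move=> v_gt0 b_gt0 le_bg_v.
have v_neq0 : (v%:R != 0 :> R)%R by rewrite pnatr_eq0 -lt0n.
have b_neq0 : (b%:R != 0 :> R)%R by rewrite pnatr_eq0 -lt0n.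
by rewrite natrB // !natrM; split; field; rewrite ?v_neq0 ?b_neq0.
Qed.

Theorem theorem1 (v g b : nat) (hv : 0 < v) (hg : 0 < g) (hb : 0 < b)
    (hodd : odd v) (D : 'I_b -> {set 'I_v}) (hD : NHSDP v g b D) :
  [/\ b * g <= v,
      exists P : 'I_v -> 'I_v -> option 'I_(b * v), PDA v v (v - b * g) (b * v) P,
      ((v - b * g)%:R / v%:R = 1 - (b * g)%:R / v%:R :> rat)%R,
      ((b * v)%:R / v%:R = b%:R :> rat)%R
    & (v%:R * (1 - (v - b * g)%:R / v%:R) / ((b * v)%:R / v%:R) = g%:R :> rat)%R].
Proof.
have le_bg_v : b * g <= v.
  by rewrite -(card_packing_union hD) -[v in _ <= v]card_ord max_card.
have pda : exists P, PDA v v (v - b * g) (b * v) P.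
  case: v hv hodd D hD {le_bg_v} => // n _ odd_v D packing.
  by exists (diff_pda D); apply: packing_diff_pda.
by have [? ? ?] := pda_scheme_parameters rat hv hb le_bg_v.
Qed.
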